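(* Let $S=\mathcal{M}[G;I,\Lambda;P]$ be a Rees matrix semigroup where $G$ is a finitely generated group, $I=\{i_1,\ldots,i_n\}$ and $\Lambda=\{\lambda_1,\ldots,\lambda_m\}$ are finite, and $P=(p_{\lambda,i})_{\lambda\in\Lambda,i\in I}$ is an $m\times n$ matrix with entries in $G$. Then the right ends of $S$ (the poset $\Omega S$) form an anti-chain of cardinality $n\cdot|\Omega G|$, and the left ends of $S$ form an anti-chain of cardinality $m\cdot|\Omega G|$.
   Context: The Rees matrix semigroup $\mathcal{M}[G;I,\Lambda;P]$ is the set $I\times G\times\Lambda$ with multiplication $(i,g,\lambda)(j,h,\mu)=(i,g\,p_{\lambda,j}\,h,\mu)$. A digraph on $\Omega$ is a subset $\Gamma\subseteq\Omega\times\Omega$. A path is a sequence of pairwise distinct vertices $(v_0,v_1,\ldots)$ with $(v_i,v_{i+1})\in\Gamma$ (length 0 allowed); a ray is an infinite path; an anti-ray is an infinite sequence of distinct vertices with $(v_{i+1},v_i)\in\Gamma$. For infinite $\Sigma',\Sigma\subseteq\Omega$, $\Sigma'\preccurlyeq\Sigma$ means there are infinitely many pairwise vertex-disjoint paths from vertices of $\Sigma'$ to vertices of $\Sigma$. On rays and anti-rays $\preccurlyeq$ is a preorder with associated equivalence $\approx$; the ends are the $\approx$-classes of rays and anti-rays, and $\Omega\Gamma$ is the poset of ends. The right Cayley graph $\Gamma_r(S,A)$ has vertex set $S$ and edges $(x,xa)$; the left Cayley graph $\Gamma_l(S,A)$ has edges $(x,ax)$, for $x\in S$, $a\in A$. For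 a finitely generated semigroup $S$, the right ends $\Omega S$ are $\Omega\Gamma_r(S,A)$ and the left ends are $\Omega\Gamma_l(S,A)$ for any finite generating set $A$ (well defined up to isomorphism). For the group $G$, $\Omega G$ denotes its right ends as a semigroup. An anti-chain is a poset in which no two distinct elements are comparable. *)

From Stdlib Require Import List.
From mathcomp Require Import all_boot.
Set Implicit Arguments. Unset Strict Implicit. Unset Printing Implicit Defensive.

Definition digraph (V : Type) := V -> V -> Prop.

Fixpoint chain (V : Type) (Gam : digraph V) (p : list V) : Prop :=
  match p with
  | nil => True
  | x :: r => match r with
              | nil => True
              | y :: _ => Gam x y /\ chain Gam r
              end
  end.

Definition path_from_to (V : Type) (Gam : digraph V) (X Y : V -> Prop)
  (p : list V) : Prop :=
  match p with
  | nil => False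
  | x :: _ => X x /\ Y (List.last p x) /\ List.NoDup p /\ chain Gam p
  end.

Definition preceq (V : Type) (Gam : digraph V) (X Y : V -> Prop) : Prop :=
  exists p : nat -> list V,
    (forall k, path_from_to Gam X Y (p k)) /\
    (forall i j, i <> j -> forall v, List.In v (p i) -> ~ List.In v (p j)).

Definition is_ray (V : Type) (Gam : digraph V) (r : nat -> V) : Prop :=
  (forall i j, r i = r j -> i = j) /\ (forall i, Gam (r i) (r i.+1)).

Definition is_antiray (V : Type) (Gam : digraph V) (r : nat -> V) : Prop :=
  (forall i j, r i = r j -> i = j) /\ (forall i, Gam (r i.+1) (r i)).

Definition RA (V : Type) (Gam : digraph V) :=
  {r : nat -> V | is_ray Gam r \/ is_antiray Gam r}.

Definition verts (V : Type) (Gam : digraph V) (x : RA Gam) : V -> Prop :=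
  fun v => exists k, proj1_sig x k = v.

Definition ra_le (V : Type) (Gam : digraph V) (x y : RA Gam) : Prop :=
  preceq Gam (verts x) (verts y).

Definition ra_eq (V : Type) (Gam : digraph V) (x y : RA Gam) : Prop :=
  ra_le x y /\ ra_le y x.

Definition End (V : Type) (Gam : digraph V) :=
  {E : RA Gam -> Prop | exists x, E = ra_eq x}.

Definition end_le (V : Type) (Gam : digraph V) (E F : End Gam) : Prop :=
  exists x y, proj1_sig E x /\ proj1_sig F y /\ ra_le x y.

Definition ends_antichain (V : Type) (Gam : digraph V) : Prop :=
  forall E F : End Gam, end_le E F -> E = F.

Definition equipotent (A B : Type) : Prop :=
  exists (f : A -> B) (g : B -> A),
    (forall a, g (f a) = a) /\ (forall b, f (g b) = b).

Definition sg_generates (T : Type) (mul : T -> T -> T) (A : list T) : Prop :=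
  forall x, exists a0 l, List.In a0 A /\ List.Forall (fun a => List.In a A) l /\
                         x = List.fold_left mul l a0.

Definition right_cayley (T : Type) (mul : T -> T -> T) (A : list T) : digraph T :=
  fun x y => exists a, List.In a A /\ y = mul x a.

Definition left_cayley (T : Type) (mul : T -> T -> T) (A : list T) : digraph T :=
  fun x y => exists a, List.In a A /\ y = mul a x.

Definition rees (G : Type) (n m : nat) := ('I_n * G * 'I_m)%type.

Definition rees_mul (G : Type) (mul : G -> G -> G) (n m : nat)
  (P : 'I_m -> 'I_n -> G) (x y : rees G n m) : rees G n m :=
  let: (i, g, lam) := x in
  let: (j, h, mu) := y in
  (i, mul (mul g (P lam j)) h, mu).

(* Ends are compared through families of walks: [X ≼ Y] holds iff there are
   infinitely many walks from [X] to [Y] with every vertex on only finitely many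
   of them, and such families can be pushed along any map that sends edges to
   walks of bounded length and has finite fibres.  The right Cayley graph of
   S = M[G; I, Λ; P] is fibred over I: the row is constant along right edges,
   (i, g, λ) ↦ g maps it onto the Cayley graph of G, for each row i the map
   g ↦ (i, g, λ0) maps back, and (i, g, λ) and (i, g, λ0) are joined by short
   walks both ways.  Hence right ends of S are pairs (row, end of G).  Every
   right multiplication can be undone by another one, so ≼ is symmetric and the
   ends form an anti-chain.  Left ends are right ends of the opposite semigroup,
   fibred over Λ through (i, g, λ) ↦ g⁻¹. *)

From Stdlib Require Import List Relations Lia PeanoNat.
From Stdlib Require Import Classical ClassicalEpsilon FunctionalExtensionality PropExtensionality ProofIrrelevance.
Import ListNotations.

Local Arguments transp {A} R x y.
Local Arguments clos_refl {A} R x _.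

Section Lists.
Context {V : Type}.
Implicit Types (R : digraph V) (l : list V).

Lemma last_cons (a : V) l d : List.last (a :: l) d = List.last l a.
Proof.
  revert a d; induction l as [|b l IH]; intros a d; [reflexivity|].
  change (List.last (b :: l) d = List.last (b :: l) a). now rewrite !IH.
Qed.

Lemma last_app l1 l2 d : List.last (l1 ++ l2) d = List.last l2 (List.last l1 d).
Proof.
  revert d; induction l1 as [|a l1 IH]; intro d; [reflexivity|].
  change (List.last (a :: (l1 ++ l2)) d = List.last l2 (List.last (a :: l1) d)).
  now rewrite !last_cons.
Qed.

Lemma last_In l x : In (List.last l x) (x :: l).
Proof.
  revert x; induction l as [|a l IH]; intro x; [now left|].
  rewrite last_cons. right. apply IH.
Qed.

Lemma last_repeat (x : V) K : List.last (repeat x K) x = x.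
Proof. induction K as [|K IH]; [reflexivity|]. now rewrite (last_cons x (repeat x K)). Qed.

Lemma nth_length_last (x : V) l d : nth (length l) (x :: l) d = List.last l x.
Proof.
  revert x; induction l as [|a l IH]; intro x; [reflexivity|].
  rewrite last_cons. apply IH.
Qed.

Lemma chain_cons2 R x y l : chain R (x :: y :: l) <-> R x y /\ chain R (y :: l).
Proof. reflexivity. Qed.

Lemma chain_mono R R' l : (forall x y, R x y -> R' x y) -> chain R l -> chain R' l.
Proof.
  intro H; induction l as [|a l IH]; simpl; auto.
  destruct l; auto. intros [h1 h2]; split; auto.
Qed.

Lemma chain_app R x l1 l2 :
  chain R (x :: l1 ++ l2) <-> chain R (x :: l1) /\ chain R (List.last l1 x :: l2).
Proof.
  revert x; induction l1 as [|a l1 IH]; intro x; [simpl; tauto|].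
  rewrite last_cons. change (chain R (x :: a :: (l1 ++ l2)) <->
    chain R (x :: a :: l1) /\ chain R (List.last l1 a :: l2)).
  rewrite !chain_cons2, IH. tauto.
Qed.

Lemma chain_suffix R l1 l2 : chain R (l1 ++ l2) -> chain R l2.
Proof.
  induction l1 as [|a l1 IH]; simpl; auto.
  intro h. apply IH. destruct (l1 ++ l2); [exact I|apply h].
Qed.

Lemma chain_nth R l d i : chain R l -> S i < length l -> R (nth i l d) (nth (S i) l d).
Proof.
  revert i; induction l as [|a [|b l] IH]; intros i; simpl; try lia.
  intros [h1 h2] hi. destruct i; auto. apply (IH i h2). simpl; lia.
Qed.

Lemma clos_refl_cases R x y : clos_refl R x y -> x = y \/ R x y.
Proof. intros []; auto. Qed.

Lemma chain_repeat R x K : chain (clos_refl R) (x :: repeat x K).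
Proof. induction K as [|[|K] IH]; simpl in *; auto; split; auto; apply r_refl. Qed.

End Lists.

Definition finite {T : Type} (X : T -> Prop) := exists l : list T, forall x, X x -> In x l.

Lemma finite_list {T} (l : list T) : finite (fun x => In x l).
Proof. now exists l. Qed.

Lemma finite_subset {T} (X Y : T -> Prop) : (forall x, Y x -> X x) -> finite X -> finite Y.
Proof. intros h [l hl]. exists l. auto. Qed.

Lemma finite_union {T} (X Y : T -> Prop) : finite X -> finite Y -> finite (fun x => X x \/ Y x).
Proof.
  intros [l1 h1] [l2 h2]. exists (l1 ++ l2). intros x [hx|hx]; apply in_or_app; auto.
Qed.

Lemma finite_bind {S T} (X : S -> Prop) (Y : S -> T -> Prop) :
  finite X -> (forall x, X x -> finite (Y x)) -> finite (fun y => exists x, X x /\ Y x y).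
Proof.
  intros [l hl] hY.
  enough (H : forall l', finite (fun y => exists x, In x l' /\ X x /\ Y x y)).
  { destruct (H l) as [l' h']. exists l'. intros y [x [hx hxy]]. apply h'. eauto. }
  induction l' as [|a l' [lb hb]]; [exists []; intros y [x [[] _]]|].
  destruct (classic (X a)) as [ha|ha].
  - destruct (hY a ha) as [la hla]. exists (la ++ lb).
    intros y [x [[<-|hx] [hX hxy]]]; apply in_or_app; [left|right]; eauto.
  - exists lb. intros y [x [[<-|hx] [hX hxy]]]; [contradiction|eauto].
Qed.

Lemma finite_image {S T} (f : S -> T) (X : S -> Prop) :
  finite X -> finite (fun y => exists x, X x /\ y = f x).
Proof. intros [l hl]. exists (map f l). intros y [x [hx ->]]. now apply in_map, hl. Qed.

Lemma finite_image2 {S1 S2 T} (f : S1 -> S2 -> T) (X1 : S1 -> Prop) (X2 : S2 -> Prop) :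
  finite X1 -> finite X2 -> finite (fun y => exists x1 x2, X1 x1 /\ X2 x2 /\ y = f x1 x2).
Proof.
  intros h1 h2. apply (finite_subset (fun y => exists x1, X1 x1 /\ exists x2, X2 x2 /\ y = f x1 x2)).
  - intros y [x1 [x2 [a [b c]]]]. eauto.
  - apply finite_bind; auto. intros x1 _. now apply finite_image.
Qed.

Definition walk_verts {V} (w : V * list V) : list V := fst w :: snd w.
Definition walk_end {V} (w : V * list V) : V := List.last (snd w) (fst w).
Definition is_walk {V} (R : digraph V) (X Y : V -> Prop) (w : V * list V) :=
  X (fst w) /\ Y (walk_end w) /\ chain (clos_refl R) (walk_verts w).
Definition locally_finite {V} (f : nat -> list V) :=
  forall v, exists N, forall k, N <= k -> ~ In v (f k).
Definition many_walks {V} (R : digraph V) (X Y : V -> Prop) :=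
  exists W : nat -> V * list V,
    (forall k, is_walk R X Y (W k)) /\ locally_finite (fun k => walk_verts (W k)).

Section Walks.
Context {V : Type}.
Implicit Types (R : digraph V) (X Y Z : V -> Prop) (f : nat -> list V).

Lemma walk_end_In (w : V * list V) : In (walk_end w) (walk_verts w).
Proof. apply last_In. Qed.

Lemma locally_finite_list f : locally_finite f ->
  forall F : list V, exists N, forall k, N <= k -> forall v, In v F -> ~ In v (f k).
Proof.
  intros H F; induction F as [|a F [N1 h1]]; [exists 0; simpl; tauto|].
  destruct (H a) as [N2 h2]. exists (N1 + N2).
  intros k hk v [<-|hv]; [apply h2|apply h1]; auto; lia.
Qed.

Lemma locally_finite_incl f g : (forall k, incl (g k) (f k)) -> locally_finite f -> locally_finite g.
Proof. intros hfg H v. destruct (H v) as [N hN]. exists N. intros k hk hv. now apply (hN k hk), hfg. Qed.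

Fixpoint greedy_union (N : list V -> nat) f (j : nat) : list V :=
  match j with 0 => [] | S j => greedy_union N f j ++ f (N (greedy_union N f j)) end.

(* Greedily choose each next list beyond the index from which the union of all
   previously chosen lists is avoided. *)
Lemma locally_finite_disjoint f : locally_finite f ->
  exists sigma : nat -> nat, forall i j, i <> j -> forall v, In v (f (sigma i)) -> ~ In v (f (sigma j)).
Proof.
  intro H.
  destruct (choice _ (locally_finite_list f H)) as [N hN].
  set (acc := greedy_union N f).
  assert (acc_mono : forall i j, i <= j -> incl (acc i) (acc j)).
  { intros i j h. induction h; [apply incl_refl|]. intros v hv. apply in_or_app. auto. }
  assert (key : forall i j, i < j -> forall v, In v (f (N (acc i))) -> ~ In v (f (N (acc j)))).
  { intros i j hij v hi hj. apply (hN (acc j) (N (acc j)) (le_n _) v); auto.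
    apply (acc_mono (S i) j hij). apply in_or_app. now right. }
  exists (fun j => N (acc j)). intros i j hij v hi hj.
  destruct (Nat.lt_gt_cases i j) as [[h|h] _]; auto; [exact (key i j h v hi hj)|exact (key j i h v hj hi)].
Qed.

Lemma walk_to_path R : forall l x, chain (clos_refl R) (x :: l) ->
  exists q, chain R (x :: q) /\ NoDup (x :: q) /\ List.last q x = List.last l x /\ incl (x :: q) (x :: l).
Proof.
  induction l as [|a l IH]; intros x H.
  - exists []. repeat split; auto using incl_refl. repeat constructor; auto.
  - destruct H as [Hxa Hc]. destruct (IH a Hc) as [q [h1 [h2 [h3 h4]]]].
    rewrite last_cons, <- h3.
    destruct Hxa as [a Hxa|].
    + destruct (classic (In x (a :: q))) as [Hin|Hnin].
      * destruct (in_split _ _ Hin) as [q1 [q2 Hq]]. exists q2. rewrite Hq in h1, h2.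
        assert (E : List.last (a :: q) a = List.last q2 x) by now rewrite Hq, last_app, last_cons.
        rewrite last_cons in E. rewrite E. split; [|split; [|split]]; auto.
        -- exact (chain_suffix R q1 (x :: q2) h1).
        -- exact (NoDup_app_remove_l _ _ h2).
        -- intros v hv. assert (In v (a :: q)) by (rewrite Hq; apply in_or_app; now right).
           specialize (h4 v H). simpl in *; tauto.
      * exists (a :: q). split; [split; auto|split; [constructor; auto|split]].
        -- now rewrite last_cons.
        -- intros v [<-|hv]; [now left|right; now apply h4].
    + exists q. repeat split; auto. intros v hv. specialize (h4 v hv). simpl in *; tauto.
Qed.

Lemma many_walks_preceq R X Y : many_walks R X Y -> preceq R X Y.
Proof.
  intros [W [HW HL]].
  assert (Hp : forall k, exists q, path_from_to R X Y q /\ incl q (walk_verts (W k))).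
  { intro k. destruct (HW k) as [hx [hy hc]]. destruct (W k) as [x l].
    unfold walk_verts, walk_end in *; simpl in *.
    destruct (walk_to_path R l x hc) as [q [h1 [h2 [h3 h4]]]]. exists (x :: q).
    repeat split; auto. now rewrite last_cons, h3. }
  destruct (choice _ Hp) as [p hp].
  destruct (locally_finite_disjoint p) as [sigma hsigma].
  - exact (locally_finite_incl _ _ (fun k => proj2 (hp k)) HL).
  - exists (fun j => p (sigma j)). split; [intro k; apply hp|exact hsigma].
Qed.

Lemma preceq_many_walks R X Y : preceq R X Y -> many_walks R X Y.
Proof.
  intros [p [Hp Hd]]. pose proof (Hp 0) as H0. destruct (p 0) as [|v0 l0]; [destruct H0|].
  assert (Ep : forall k, walk_verts (hd v0 (p k), tl (p k)) = p k).
  { intro k. specialize (Hp k). now destruct (p k). }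
  exists (fun k => (hd v0 (p k), tl (p k))). split.
  - intro k. specialize (Hp k). destruct (p k) as [|x l]; [destruct Hp|].
    destruct Hp as [h1 [h2 [_ h4]]]. unfold is_walk, walk_end, walk_verts; simpl.
    rewrite last_cons in h2. repeat split; auto.
    apply (chain_mono R (clos_refl R) (x :: l)); auto. now constructor.
  - apply (locally_finite_incl p); [intros k; rewrite Ep; apply incl_refl|].
    intro v. destruct (classic (exists j, In v (p j))) as [[j hj]|hn].
    + exists (S j). intros k hk hv. apply (Hd j k ltac:(lia) v hj hv).
    + exists 0. intros k _ hv. apply hn. now exists k.
Qed.

Lemma many_walks_mono R X X' Y Y' :
  (forall x, X x -> X' x) -> (forall y, Y y -> Y' y) -> many_walks R X Y -> many_walks R X' Y'.
Proof.
  intros hx hy [W [HW HL]]. exists W. split; auto.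
  intro k. destruct (HW k) as [h1 [h2 h3]]. repeat split; auto.
Qed.

Lemma clos_refl_transp R x y : clos_refl (transp R) x y <-> transp (clos_refl R) x y.
Proof. split; intros []; constructor; auto; now constructor. Qed.

Fixpoint rev_walk (x : V) (l : list V) : V * list V :=
  match l with
  | [] => (x, [])
  | a :: l' => (fst (rev_walk a l'), snd (rev_walk a l') ++ [x])
  end.

Lemma rev_walk_start x l : fst (rev_walk x l) = List.last l x.
Proof.
  revert x; induction l as [|a l IH]; intro x; [reflexivity|].
  change (fst (rev_walk a l) = List.last (a :: l) x). now rewrite IH, last_cons.
Qed.

Lemma rev_walk_end x l : walk_end (rev_walk x l) = x.
Proof. destruct l; [reflexivity|]. unfold walk_end. simpl. now rewrite last_app. Qed.

Lemma rev_walk_length x l : length (snd (rev_walk x l)) = length l.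
Proof. revert x; induction l as [|a l IH]; intro x; [reflexivity|]. simpl. rewrite length_app, IH. simpl. lia. Qed.

Lemma rev_walk_In x l v : In v (walk_verts (rev_walk x l)) <-> In v (x :: l).
Proof.
  revert x; induction l as [|a l IH]; intro x; [simpl; tauto|].
  specialize (IH a). unfold walk_verts in *; simpl in *. rewrite in_app_iff. simpl. tauto.
Qed.

Lemma rev_walk_chain R x l : chain (clos_refl R) (x :: l) -> chain (clos_refl (transp R)) (walk_verts (rev_walk x l)).
Proof.
  revert x; induction l as [|a l IH]; intros x H; [exact I|].
  apply chain_cons2 in H. destruct H as [h1 h2]. specialize (IH a h2).
  unfold walk_verts; simpl. apply chain_app. split; [exact IH|].
  change (List.last _ _) with (walk_end (rev_walk a l)). rewrite rev_walk_end.
  split; [now apply clos_refl_transp|exact I].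
Qed.

Lemma many_walks_transp R X Y : many_walks R X Y -> many_walks (transp R) Y X.
Proof.
  intros [W [HW HL]]. exists (fun k => rev_walk (fst (W k)) (snd (W k))). split.
  - intro k. destruct (HW k) as [h1 [h2 h3]]. unfold is_walk.
    rewrite rev_walk_start, rev_walk_end. repeat split; auto. now apply rev_walk_chain.
  - apply (locally_finite_incl (fun k => walk_verts (W k))); auto.
    intros k v hv. exact (proj1 (rev_walk_In _ _ _) hv).
Qed.

End Walks.

Definition escaping {V} (s : nat -> V) := forall v, exists N, forall t, N <= t -> s t <> v.
Definition proper_walk {V} (R : digraph V) (s : nat -> V) :=
  (forall t, clos_refl R (s t) (s (S t))) /\ escaping s.
Definition range {V} (s : nat -> V) : V -> Prop := fun v => exists t, s t = v.
Definition image {V W} (f : V -> W) (X : V -> Prop) : W -> Prop := fun w => exists u, X u /\ f u = w.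
Definition walk_equiv {V} (R : digraph V) (X Y : V -> Prop) := many_walks R X Y /\ many_walks R Y X.
Definition traversable {V} (R : digraph V) (Y : V -> Prop) :=
  exists s, (proper_walk R s \/ proper_walk (transp R) s) /\ forall y, Y y -> range s y.

Section ProperWalks.
Context {V : Type}.
Implicit Types (R : digraph V) (X Y Z : V -> Prop) (s z : nat -> V).

Lemma escaping_finite s F : escaping s -> finite F -> exists N, forall t, N <= t -> ~ F (s t).
Proof.
  intros H [l hl]. enough (exists N, forall t, N <= t -> ~ In (s t) l) as [N hN].
  { exists N. intros t ht hF. exact (hN t ht (hl _ hF)). }
  clear hl. induction l as [|a l [N1 h1]]; [exists 0; simpl; tauto|].
  destruct (H a) as [N2 h2]. exists (N1 + N2). intros t ht [e|hv]; [apply (h2 t)|apply (h1 t)]; auto; lia.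
Qed.

Lemma injective_escaping s : (forall i j, s i = s j -> i = j) -> escaping s.
Proof.
  intros hi v. destruct (classic (exists k, s k = v)) as [[k hk]|hn].
  - exists (S k). intros t ht e. assert (t = k) by (apply hi; congruence). lia.
  - exists 0. intros t _ e. apply hn. now exists t.
Qed.

Lemma many_walks_of_points R X Y z (g : V -> V * list V) : escaping z ->
  (forall k, is_walk R X Y (g (z k))) -> (forall w, finite (fun u => In w (walk_verts (g u)))) ->
  many_walks R X Y.
Proof.
  intros hz hg hf. exists (fun k => g (z k)). split; auto.
  intro w. destruct (escaping_finite z _ hz (hf w)) as [N hN]. exists N. exact hN.
Qed.

Lemma many_walks_constant R X Y z : escaping z -> (forall k, X (z k)) -> (forall k, Y (z k)) ->
  many_walks R X Y.
Proof.
  intros hz hx hy. apply (many_walks_of_points R X Y z (fun u => (u, []))); [exact hz| |].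
  - intro k. repeat split; [apply hx|apply hy].
  - intro w. exists [w]. intros u [e|[]]. now left.
Qed.

Definition segment s a d : V * list V := (s a, map s (seq (S a) d)).

Lemma segment_chain (Q : digraph V) s a d : (forall t, Q (s t) (s (S t))) -> chain Q (walk_verts (segment s a d)).
Proof.
  intro H. revert a; induction d as [|d IH]; intro a; [exact I|].
  split; [apply H|apply (IH (S a))].
Qed.

Lemma segment_end s a d : walk_end (segment s a d) = s (a + d).
Proof.
  revert a; induction d as [|d IH]; intro a; [unfold walk_end; simpl; f_equal; lia|].
  change (List.last (s (S a) :: map s (seq (S (S a)) d)) (s a) = s (a + S d)).
  rewrite last_cons. specialize (IH (S a)). unfold walk_end, segment in IH; simpl in IH.
  rewrite IH. f_equal; lia.
Qed.

Lemma segment_In s a d v : In v (walk_verts (segment s a d)) -> exists t, a <= t /\ s t = v.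
Proof.
  intros [h|h]; [now exists a|].
  apply in_map_iff in h. destruct h as [t [h1 h2]]. apply in_seq in h2. exists t; split; auto; lia.
Qed.

Lemma many_walks_along R s X Y (a b : nat -> nat) : proper_walk R s ->
  (forall k, a k <= b k) -> (forall N, exists M, forall k, M <= k -> N <= a k) ->
  (forall k, X (s (a k))) -> (forall k, Y (s (b k))) -> many_walks R X Y.
Proof.
  intros [hs hp] hab hinf hx hy. exists (fun k => segment s (a k) (b k - a k)). split.
  - intro k. split; [exact (hx k)|split; [|now apply segment_chain]].
    rewrite segment_end. replace (a k + (b k - a k)) with (b k) by (specialize (hab k); lia). apply hy.
  - intro v. destruct (hp v) as [N hN]. destruct (hinf N) as [M hM]. exists M. intros k hk hv.
    apply segment_In in hv. destruct hv as [t [h1 h2]]. apply (hN t); auto. specialize (hM k hk). lia.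
Qed.

Lemma walk_indices_unbounded s (W : nat -> V * list V) (pos : V * list V -> V) (a : nat -> nat) :
  locally_finite (fun k => walk_verts (W k)) -> (forall w, In (pos w) (walk_verts w)) ->
  (forall k, s (a k) = pos (W k)) -> forall N, exists M, forall k, M <= k -> N <= a k.
Proof.
  intros LW hpos ha N. destruct (locally_finite_list _ LW (map s (seq 0 N))) as [M hM].
  exists M. intros k hk. destruct (Compare_dec.le_lt_dec N (a k)) as [h|h]; auto. exfalso.
  apply (hM k hk (s (a k))); [apply in_map, in_seq; lia|rewrite ha; apply hpos].
Qed.

(* Glue a walk into [Y], a stretch of the proper walk through [Y], and a walk out of [Y]. *)
Lemma many_walks_trans_forward R X Y Z s : proper_walk R s -> (forall y, Y y -> range s y) ->
  many_walks R X Y -> many_walks R Y Z -> many_walks R X Z.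
Proof.
  intros [hs hp] hY [P [HP LP]] [Q [HQ LQ]].
  destruct (choice (fun k t => s t = walk_end (P k))) as [a ha].
  { intro k. destruct (HP k) as [_ [h _]]. destruct (hY _ h) as [t ht]. now exists t. }
  destruct (choice (fun k t => s t = fst (Q k))) as [b hb].
  { intro k. destruct (HQ k) as [h _]. destruct (hY _ h) as [t ht]. now exists t. }
  pose proof (walk_indices_unbounded s P walk_end a LP walk_end_In ha) as ainf.
  pose proof (walk_indices_unbounded s Q fst b LQ (fun w => or_introl eq_refl) hb) as binf.
  destruct (choice (fun k l => k <= l /\ a k <= b l)) as [lk hlk].
  { intro k. destruct (binf (a k)) as [M hM]. exists (Nat.max M k). split; [lia|]. apply hM. lia. }
  set (mid := fun k => segment s (a k) (b (lk k) - a k)).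
  exists (fun k => (fst (P k), snd (P k) ++ snd (mid k) ++ snd (Q (lk k)))). split.
  - intro k. destruct (HP k) as [h1 [h2 h3]]. destruct (HQ (lk k)) as [g1 [g2 g3]].
    assert (E1 : walk_end (P k) = fst (mid k)) by (symmetry; apply ha).
    assert (E2 : walk_end (mid k) = fst (Q (lk k))).
    { unfold mid. rewrite segment_end, <- hb. f_equal. specialize (hlk k). lia. }
    unfold walk_end in E1, E2. split; [exact h1|split].
    + unfold walk_end; cbn [fst snd]. now rewrite !last_app, E1, E2.
    + unfold walk_verts; cbn [fst snd]. apply chain_app. split; [exact h3|]. rewrite E1.
      apply chain_app. split; [now apply segment_chain|]. now rewrite E2.
  - intro v. destruct (LP v) as [N1 h1]. destruct (LQ v) as [N2 h2]. destruct (hp v) as [N3 h3].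
    destruct (ainf N3) as [M hM]. exists (N1 + N2 + M). intros k hk hv.
    destruct hv as [hv|hv]; [apply (h1 k ltac:(lia)); now left|].
    apply in_app_iff in hv. destruct hv as [hv|hv]; [apply (h1 k ltac:(lia)); now right|].
    apply in_app_iff in hv. destruct hv as [hv|hv].
    + destruct (segment_In s (a k) _ v (or_intror hv)) as [t [ht1 ht2]].
      apply (h3 t); auto. specialize (hM k ltac:(lia)). lia.
    + apply (h2 (lk k)); [specialize (hlk k); lia|now right].
Qed.

Lemma many_walks_trans R X Y Z : traversable R Y ->
  many_walks R X Y -> many_walks R Y Z -> many_walks R X Z.
Proof.
  intros [s [[hs|hs] hY]] h1 h2; [exact (many_walks_trans_forward R X Y Z s hs hY h1 h2)|].
  apply many_walks_transp in h1, h2.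
  exact (many_walks_transp _ _ _ (many_walks_trans_forward (transp R) Z Y X s hs hY h2 h1)).
Qed.

Lemma walk_equiv_trans R X Y Z : traversable R Y -> walk_equiv R X Y -> walk_equiv R Y Z -> walk_equiv R X Z.
Proof. intros hw [a b] [c d]. split; eapply many_walks_trans; eauto. Qed.

Lemma walk_equiv_sym R X Y : walk_equiv R X Y -> walk_equiv R Y X.
Proof. now intros [a b]. Qed.

Lemma walk_equiv_transp R X Y : walk_equiv (transp R) X Y -> walk_equiv R X Y.
Proof. intros [a b]. split; now apply many_walks_transp in b, a. Qed.

Lemma exists_max (Pr : nat -> Prop) N : (forall t, Pr t -> t < N) -> (exists t, Pr t) ->
  exists t, Pr t /\ forall t', Pr t' -> t' <= t.
Proof.
  revert Pr; induction N as [|N IH]; intros Pr hb [t ht]; [specialize (hb t ht); lia|].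
  destruct (classic (Pr N)) as [h|h].
  - exists N. split; auto. intros t' ht'. specialize (hb t' ht'). lia.
  - apply IH; eauto. intros t' ht'. specialize (hb t' ht'). destruct (Nat.eq_dec t' N); subst; [tauto|lia].
Qed.

(* Jump repeatedly to the last visit of the current vertex and step once; the
   vertices reached form a ray inside the range of [s]. *)
Lemma proper_walk_ray R s : proper_walk R s ->
  exists r, is_ray R r /\ walk_equiv R (range r) (range s) /\ (forall y, range r y -> range s y).
Proof.
  intros [hs hp].
  assert (HL : forall t, exists L, s L = s t /\ forall t', s t' = s t -> t' <= L).
  { intro t. destruct (hp (s t)) as [N hN]. apply exists_max with N; [|now exists t].
    intros t' h. destruct (Compare_dec.le_lt_dec N t'); auto. exfalso; now apply (hN t'). }
  destruct (choice _ HL) as [last_visit hL].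
  set (T := fix T j := match j with 0 => last_visit 0 | S j => last_visit (S (T j)) end).
  assert (HM : forall j t', s t' = s (T j) -> t' <= T j).
  { intros [|j] t' h; apply (proj2 (hL _)); rewrite h; apply (proj1 (hL _)). }
  assert (HS : forall j, s (T (S j)) = s (S (T j))) by (intro j; apply hL).
  assert (Hinc : forall j, T j < T (S j)) by (intro j; apply (HM (S j)); now rewrite HS).
  assert (Hmono : forall i j, i < j -> T i < T j).
  { intros i j h. induction h; [apply Hinc|specialize (Hinc m); lia]. }
  assert (Hge : forall j, j <= T j) by (induction j; [lia|specialize (Hinc j); lia]).
  assert (Hinj : forall i j, s (T i) = s (T j) -> i = j).
  { intros i j h. destruct (Nat.lt_trichotomy i j) as [hij|[hij|hij]]; auto; exfalso.
    - specialize (HM i (T j) (eq_sym h)). specialize (Hmono i j hij). lia.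
    - specialize (HM j (T i) h). specialize (Hmono j i hij). lia. }
  assert (Hray : is_ray R (fun j => s (T j))).
  { split; [exact Hinj|]. intro j. rewrite HS.
    destruct (clos_refl_cases R _ _ (hs (T j))) as [e|h]; auto. exfalso.
    specialize (HM j (S (T j)) (eq_sym e)). lia. }
  exists (fun j => s (T j)). split; [exact Hray|split].
  - split.
    + apply (many_walks_constant R _ _ (fun j => s (T j))); [now apply injective_escaping| |];
        intro k; [now exists k|now exists (T k)].
    + apply (many_walks_along R s _ _ (fun k => k) T (conj hs hp) Hge); [intro N; now exists N| |];
        intro k; now exists k.
  - intros y [k hk]. now exists (T k).
Qed.

End ProperWalks.

Section Ends.
Context {V : Type} (R : digraph V).

Lemma RA_escaping (x : RA R) : escaping (proj1_sig x).
Proof. destruct x as [r hr]; simpl. destruct hr as [[h _]|[h _]]; now apply injective_escaping. Qed.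

Lemma RA_proper_walk (x : RA R) : proper_walk R (proj1_sig x) \/ proper_walk (transp R) (proj1_sig x).
Proof.
  pose proof (RA_escaping x) as hp. destruct x as [r hr]; simpl in *.
  destruct hr as [[_ h]|[_ h]]; [left|right]; split; auto; intro t; constructor; apply h.
Qed.

Lemma RA_traversable (x : RA R) : traversable R (verts x).
Proof. exists (proj1_sig x). split; [apply RA_proper_walk|auto]. Qed.

Lemma ra_eq_walk_equiv (x y : RA R) : ra_eq x y <-> walk_equiv R (verts x) (verts y).
Proof.
  split; intros [a b]; split; try (apply preceq_many_walks; assumption); now apply many_walks_preceq.
Qed.

Lemma ra_eq_refl (x : RA R) : ra_eq x x.
Proof.
  apply ra_eq_walk_equiv.
  assert (many_walks R (verts x) (verts x)) by
    (apply (many_walks_constant R _ _ (proj1_sig x)); [apply RA_escaping| |]; intro k; now exists k).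
  now split.
Qed.

Lemma ra_eq_sym (x y : RA R) : ra_eq x y -> ra_eq y x.
Proof. now intros [a b]. Qed.

Lemma ra_eq_trans (x y z : RA R) : ra_eq x y -> ra_eq y z -> ra_eq x z.
Proof.
  rewrite !ra_eq_walk_equiv. intros h1 h2. apply (walk_equiv_trans R _ (verts y)); auto.
  apply RA_traversable.
Qed.

Lemma ra_eq_class (x y : RA R) : ra_eq x y -> ra_eq x = ra_eq y.
Proof.
  intro h. apply functional_extensionality. intro z. apply propositional_extensionality.
  split; intro h'; [apply (ra_eq_trans y x z); auto; now apply ra_eq_sym|now apply (ra_eq_trans x y z)].
Qed.

Definition end_of (x : RA R) : End R := exist _ (ra_eq x) (ex_intro _ x eq_refl).

Lemma End_eq (E F : End R) : proj1_sig E = proj1_sig F -> E = F.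
Proof. destruct E, F; simpl. intro h. now apply subset_eq_compat. Qed.

Definition end_rep (E : End R) : RA R := proj1_sig (constructive_indefinite_description _ (proj2_sig E)).

Lemma end_rep_spec (E : End R) : proj1_sig E = ra_eq (end_rep E).
Proof. exact (proj2_sig (constructive_indefinite_description _ (proj2_sig E))). Qed.

Lemma end_of_rep (E : End R) : end_of (end_rep E) = E.
Proof. apply End_eq. symmetry. apply end_rep_spec. Qed.

Lemma end_of_eq (x y : RA R) : ra_eq x y -> end_of x = end_of y.
Proof. intro h. apply End_eq. now apply ra_eq_class. Qed.

Lemma ra_eq_end_rep (x : RA R) : ra_eq x (end_rep (end_of x)).
Proof. apply ra_eq_sym. rewrite <- (end_rep_spec (end_of x)). apply ra_eq_refl. Qed.

Lemma ends_antichain_of_symmetric :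
  (forall X Y, many_walks R X Y -> many_walks R Y X) -> ends_antichain R.
Proof.
  intros hsym E F [x [y [hx [hy hle]]]].
  rewrite <- (end_of_rep E), <- (end_of_rep F). apply end_of_eq.
  rewrite (end_rep_spec E) in hx. rewrite (end_rep_spec F) in hy.
  assert (hxy : ra_eq x y) by (split; auto; apply many_walks_preceq, hsym, preceq_many_walks, hle).
  apply (ra_eq_trans _ x); [exact hx|]. apply (ra_eq_trans _ y); [exact hxy|now apply ra_eq_sym].
Qed.

Lemma proper_walk_RA s : proper_walk R s \/ proper_walk (transp R) s ->
  exists r : RA R, walk_equiv R (verts r) (range s) /\ (forall y, verts r y -> range s y).
Proof.
  intros [h|h].
  - destruct (proper_walk_ray R s h) as [r [h1 [h2 h3]]]. now exists (exist _ r (or_introl h1)).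
  - destruct (proper_walk_ray (transp R) s h) as [r [h1 [h2 h3]]]. exists (exist _ r (or_intror h1)).
    split; auto. now apply walk_equiv_transp.
Qed.

End Ends.

Definition out_finite {V} (R : digraph V) := forall v, finite (R v).
Definition edge_invariant {V I} (R : digraph V) (c : V -> I) := forall u v, R u v -> c u = c v.

(* A coarse substitute for a graph morphism: edges go to walks of one fixed
   length, and only finitely many vertices are sent near any given vertex. *)
Record transfer {V W : Type} (R : digraph V) (D : digraph W) (f : V -> W) (K : nat)
    (fw : V -> V -> list W) : Prop := {
  transfer_walk : forall u v, R u v ->
    chain (clos_refl D) (f u :: fw u v) /\ List.last (fw u v) (f u) = f v /\ length (fw u v) = K;
  transfer_local : forall w, finite (fun u => exists v, R u v /\ In w (fw u v));
  transfer_fibre : forall w, finite (fun u => f u = w) }.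

Definition transferable {V W : Type} (R : digraph V) (D : digraph W) (f : V -> W) :=
  exists K fw, 0 < K /\ transfer R D f K fw.

Lemma chain_invariant {V I} (R : digraph V) (c : V -> I) x l y :
  edge_invariant R c -> chain (clos_refl R) (x :: l) -> In y (x :: l) -> c y = c x.
Proof.
  intro hc. revert x. induction l as [|a l IH]; intros x h [<-|hy]; auto; [destruct hy|].
  destruct h as [hxa h]. rewrite (IH a h hy). destruct hxa; auto. symmetry; now apply hc.
Qed.

Lemma edge_invariant_transp {V I} (R : digraph V) (c : V -> I) :
  edge_invariant R c -> edge_invariant (transp R) c.
Proof. intros hc u v h. symmetry. now apply hc. Qed.

Lemma succ_divmod K t : K <> 0 ->
  (S t mod K = 0 /\ S t / K = S (t / K) /\ S (t mod K) = K) \/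
  (S t mod K = S (t mod K) /\ S t / K = t / K).
Proof.
  intro hK. pose proof (Nat.div_mod t K hK) as E. pose proof (Nat.mod_upper_bound t K hK) as B.
  destruct (Nat.eq_dec (S (t mod K)) K) as [e|ne].
  - left. split; [|split; auto].
    + symmetry; apply (Nat.mod_unique (S t) K (S (t/K)) 0); lia.
    + symmetry; apply (Nat.div_unique (S t) K (S (t/K)) 0); lia.
  - right. split.
    + symmetry; apply (Nat.mod_unique (S t) K (t/K) (S (t mod K))); lia.
    + symmetry; apply (Nat.div_unique (S t) K (t/K) (S (t mod K))); lia.
Qed.

Section Transfer.
Context {V W : Type} (R : digraph V) (D : digraph W) (f : V -> W) (K : nat) (fw : V -> V -> list W).
Hypothesis T : transfer R D f K fw.

Definition transfer_step (u v : V) : list W :=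
  if excluded_middle_informative (u = v) then repeat (f u) K else fw u v.

Lemma transfer_step_walk u v : clos_refl R u v -> chain (clos_refl D) (f u :: transfer_step u v) /\
  List.last (transfer_step u v) (f u) = f v /\ length (transfer_step u v) = K.
Proof.
  intro huv. unfold transfer_step. destruct (excluded_middle_informative (u = v)) as [<-|ne].
  - split; [apply chain_repeat|split; [apply last_repeat|apply repeat_length]].
  - destruct huv as [v h|]; [now apply T|easy].
Qed.

Lemma transfer_step_local w :
  finite (fun u => exists v, clos_refl R u v /\ In w (f u :: transfer_step u v)).
Proof.
  apply (finite_subset (fun u => f u = w \/ exists v, R u v /\ In w (fw u v))).
  - intros u [v [huv [e|hin]]]; [now left|]. unfold transfer_step in hin.
    destruct (excluded_middle_informative (u = v)) as [_|ne].
    + left. symmetry. exact (repeat_spec _ _ _ hin).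
    + destruct huv as [v h|]; [right; now exists v|easy].
  - apply finite_union; [apply T|apply T].
Qed.

Fixpoint map_walk (x : V) (l : list V) : W * list W :=
  match l with
  | [] => (f x, [])
  | a :: l' => (f x, transfer_step x a ++ snd (map_walk a l'))
  end.

Lemma map_walk_start x l : fst (map_walk x l) = f x.
Proof. now destruct l. Qed.

Lemma map_walk_walk l x : chain (clos_refl R) (x :: l) ->
  chain (clos_refl D) (walk_verts (map_walk x l)) /\ walk_end (map_walk x l) = f (List.last l x).
Proof.
  revert x. induction l as [|a l IH]; intros x hc; [split; [exact I|reflexivity]|].
  destruct hc as [hxa hc]. destruct (IH a hc) as [c1 e1].
  destruct (transfer_step_walk x a hxa) as [c2 [e2 _]].
  unfold walk_verts, walk_end in *. cbn [map_walk fst snd]. rewrite map_walk_start in c1, e1. split.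
  - apply chain_app. split; auto. now rewrite e2.
  - now rewrite last_app, e2, e1, last_cons.
Qed.

Lemma map_walk_In l x w : chain (clos_refl R) (x :: l) -> In w (walk_verts (map_walk x l)) ->
  exists u v, In u (x :: l) /\ clos_refl R u v /\ In w (f u :: transfer_step u v).
Proof.
  revert x. induction l as [|a l IH]; intros x hc hin.
  - exists x, x. split; [now left|split; [apply r_refl|destruct hin as [e|[]]; now left]].
  - destruct hc as [hxa hc].
    destruct hin as [e|hin]; [exists x, a; split; [now left|split; [exact hxa|now left]]|].
    apply in_app_iff in hin.
    destruct hin as [hin|hin]; [exists x, a; split; [now left|split; [exact hxa|now right]]|].
    destruct (IH a hc) as [u [v [h1 h2]]]; [right; exact hin|]. exists u, v. split; [now right|exact h2].
Qed.

Lemma many_walks_image X Y : many_walks R X Y -> many_walks D (image f X) (image f Y).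
Proof.
  intros [P [HP LP]]. exists (fun k => map_walk (fst (P k)) (snd (P k))). split.
  - intro k. destruct (HP k) as [h1 [h2 h3]]. destruct (map_walk_walk _ _ h3) as [c e].
    split; [exists (fst (P k)); split; auto; symmetry; apply map_walk_start|split; [|exact c]].
    rewrite e. now exists (walk_end (P k)).
  - intro w. destruct (transfer_step_local w) as [F hF].
    destruct (locally_finite_list _ LP F) as [N hN]. exists N. intros k hk hw.
    destruct (HP k) as [_ [_ h3]]. destruct (map_walk_In _ _ w h3 hw) as [u [v [hu huv]]].
    exact (hN k hk u (hF u (ex_intro _ v huv)) hu).
Qed.

Lemma walk_equiv_image X Y : walk_equiv R X Y -> walk_equiv D (image f X) (image f Y).
Proof. intros [a b]; split; now apply many_walks_image. Qed.

Lemma transfer_transp : out_finite R -> exists fw', transfer (transp R) (transp D) f K fw'.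
Proof.
  intro hout. exists (fun u v => snd (rev_walk (f v) (fw v u))). split.
  - intros u v r. destruct (transfer_walk _ _ _ _ _ T v u r) as [c [e l]].
    pose proof (rev_walk_chain _ _ _ c) as c'. pose proof (rev_walk_end (f v) (fw v u)) as E2.
    assert (E1 : fst (rev_walk (f v) (fw v u)) = f u) by now rewrite rev_walk_start.
    unfold walk_verts, walk_end in c', E2. rewrite E1 in c', E2. split; [|split; [exact E2|]].
    + exact c'.
    + cbv beta. now rewrite rev_walk_length.
  - intro w. apply (finite_subset (fun u => f u = w \/ exists v, (f v = w \/ exists v', R v v' /\ In w (fw v v')) /\ R v u)).
    + intros u [v [r hin]].
      assert (hin' : In w (f v :: fw v u)) by (apply (rev_walk_In (f v) (fw v u)); now right).
      right. exists v. split; [|exact r]. destruct hin' as [e|hin']; [now left|right; now exists u].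
    + apply finite_union; [apply T|]. apply finite_bind; [apply finite_union; apply T|]. intros v _. apply hout.
  - apply T.
Qed.

Hypothesis K_pos : 0 < K.

(* The image walk visits [f (s t)] at time [t * K] and follows the transfer
   of the step from [s t] to [s (S t)] in between. *)
Lemma interpolated_walk s : (forall t, clos_refl R (s t) (s (S t))) ->
  exists s', (forall t, s' (t * K) = f (s t)) /\ (forall tau, clos_refl D (s' tau) (s' (S tau))) /\
  (forall tau, In (s' tau) (f (s (tau / K)) :: transfer_step (s (tau / K)) (s (S (tau / K))))).
Proof.
  intro hs. assert (hK : K <> 0) by lia.
  set (piece := fun t => f (s t) :: transfer_step (s t) (s (S t))).
  assert (Hpiece : forall t, chain (clos_refl D) (piece t) /\
    List.last (transfer_step (s t) (s (S t))) (f (s t)) = f (s (S t)) /\ length (piece t) = S K).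
  { intro t. destruct (transfer_step_walk _ _ (hs t)) as [a [b l]]. repeat split; auto. simpl. now rewrite l. }
  exists (fun tau => nth (tau mod K) (piece (tau / K)) (f (s 0))). split; [|split].
  - intro t. now rewrite Nat.Div0.mod_mul, Nat.div_mul.
  - intro tau. destruct (Hpiece (tau / K)) as [c [e l]].
    destruct (succ_divmod K tau hK) as [[m1 [d1 m2]]|[m1 d1]]; rewrite m1, d1.
    + replace (nth 0 (piece (S (tau / K))) (f (s 0))) with (nth K (piece (tau / K)) (f (s 0))).
      * pose proof (chain_nth _ _ (f (s 0)) (tau mod K) c) as HH. rewrite m2 in HH. apply HH. lia.
      * unfold piece at 1. rewrite <- (proj2 (proj2 (transfer_step_walk _ _ (hs (tau / K))))) at 1.
        now rewrite nth_length_last, e.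
    + apply chain_nth; auto. rewrite l, <- m1. pose proof (Nat.mod_upper_bound (S tau) K hK). lia.
  - intro tau. apply nth_In. pose proof (proj2 (proj2 (Hpiece (tau / K)))) as l. unfold piece in l.
    rewrite l. pose proof (Nat.mod_upper_bound tau K hK). lia.
Qed.

Lemma proper_walk_image s : proper_walk R s ->
  exists s', proper_walk D s' /\ walk_equiv D (range s') (image f (range s)) /\
  (forall y, image f (range s) y -> range s' y) /\
  (forall (I : Type) (c : W -> I) i, edge_invariant D c -> (forall t, c (f (s t)) = i) -> forall tau, c (s' tau) = i).
Proof.
  intros [hs hp]. assert (hK : K <> 0) by lia.
  destruct (interpolated_walk s hs) as [s' [H0 [Hstep Hin]]].
  assert (Hesc : escaping s').
  { intro w. destruct (escaping_finite s _ hp (transfer_step_local w)) as [N hN].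
    exists (N * K). intros tau htau e. assert (N <= tau / K) by (apply Nat.div_le_lower_bound; lia).
    apply (hN (tau / K) H). exists (s (S (tau / K))). split; [apply hs|]. rewrite <- e. apply Hin. }
  exists s'. split; [split; auto|split; [|split]].
  - split.
    + apply (many_walks_along D s' _ _ (fun tau => tau) (fun tau => S (tau / K) * K) (conj Hstep Hesc)).
      * intro tau. pose proof (Nat.div_mod tau K hK). pose proof (Nat.mod_upper_bound tau K hK). nia.
      * intro N. now exists N.
      * intro k. now exists k.
      * intro k. rewrite H0. exists (s (S (k / K))). split; auto. now exists (S (k / K)).
    + apply (many_walks_constant D _ _ (fun t => s' (t * K))).
      * intro w. destruct (Hesc w) as [N hN]. exists N. intros t ht. apply hN. nia.
      * intro t. rewrite H0. exists (s t). split; auto. now exists t.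
      * intro t. now exists (t * K).
  - intros y [u [[t <-] <-]]. exists (t * K). apply H0.
  - intros I c i hc hi tau. rewrite <- (hi (tau / K)).
    apply (chain_invariant D c _ _ _ hc (proj1 (transfer_step_walk _ _ (hs _))) (Hin tau)).
Qed.

End Transfer.

Section TransferEnds.
Context {V W : Type} (R : digraph V) (D : digraph W) (f : V -> W) (K : nat) (fw : V -> V -> list W).
Hypotheses (T : transfer R D f K fw) (K_pos : 0 < K) (R_out : out_finite R).

Lemma proper_walk_image_both s : proper_walk R s \/ proper_walk (transp R) s ->
  exists s', (proper_walk D s' \/ proper_walk (transp D) s') /\ walk_equiv D (range s') (image f (range s)) /\
  (forall y, image f (range s) y -> range s' y) /\
  (forall (I : Type) (c : W -> I) i, edge_invariant D c -> (forall t, c (f (s t)) = i) -> forall tau, c (s' tau) = i).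
Proof.
  intros [hs|hs].
  - destruct (proper_walk_image R D f K fw T K_pos s hs) as [s' [h1 h2]]. exists s'. now split; [left|].
  - destruct (transfer_transp R D f K fw T R_out) as [fw' T'].
    destruct (proper_walk_image _ _ f K fw' T' K_pos s hs) as [s' [h1 [h2 h3]]].
    exists s'. split; [now right|split; [now apply walk_equiv_transp|split; [apply h3|]]].
    intros I c i hc. apply h3. now apply edge_invariant_transp.
Qed.

Lemma traversable_image Y : traversable R Y -> traversable D (image f Y).
Proof.
  intros [s [hs hY]]. destruct (proper_walk_image_both s hs) as [s' [hs' [_ [hsub _]]]].
  exists s'. split; auto. intros y [u [hu <-]]. apply hsub. exists u. split; auto.
Qed.

Lemma RA_image (x : RA R) : exists r : RA D, walk_equiv D (verts r) (image f (verts x)) /\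
  (forall (I : Type) (c : W -> I) i, edge_invariant D c -> (forall u, verts x u -> c (f u) = i) ->
   forall y, verts r y -> c y = i).
Proof.
  destruct (proper_walk_image_both _ (RA_proper_walk R x)) as [s' [hs' [heq [_ hc]]]].
  destruct (proper_walk_RA D s' hs') as [r [e1 e2]]. exists r. split.
  - apply (walk_equiv_trans D _ (range s')); auto. now exists s'.
  - intros I c i hD hx y hy. destruct (e2 y hy) as [tau <-]. apply (hc I c i hD). intro t. apply hx. now exists t.
Qed.

End TransferEnds.

Section Invariants.
Context {V I : Type} (R : digraph V) (c : V -> I).
Hypothesis c_inv : edge_invariant R c.

Lemma RA_invariant (x : RA R) k : c (proj1_sig x k) = c (proj1_sig x 0).
Proof.
  destruct x as [r hr]; simpl. induction k as [|k IH]; auto. rewrite <- IH.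
  destruct hr as [[_ h]|[_ h]]; [symmetry|]; apply c_inv, h.
Qed.

Lemma ra_eq_invariant (x y : RA R) : ra_eq x y -> c (proj1_sig x 0) = c (proj1_sig y 0).
Proof.
  intros [h _]. apply preceq_many_walks in h. destruct h as [W [HW _]]. destruct (HW 0) as [[kx hx] [[ky hy] hc]].
  rewrite <- (RA_invariant x kx), <- (RA_invariant y ky), hx, hy.
  symmetry. apply (chain_invariant R c _ _ _ c_inv hc), walk_end_In.
Qed.

End Invariants.

Lemma many_walks_sym_of_return {V} (R : digraph V) K rv X Y :
  transfer (transp R) R (fun u => u) K rv -> many_walks R X Y -> many_walks R Y X.
Proof.
  intros T h. apply many_walks_transp, (many_walks_image _ _ _ _ _ T) in h.
  revert h. apply many_walks_mono; intros x [u [hu <-]]; exact hu.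
Qed.

Section FibredEnds.
Context {V W I : Type} (R : digraph V) (D : digraph W) (c : V -> I) (phi : V -> W) (psi : I -> W -> V).
Hypotheses (phi_T : transferable R D phi) (psi_T : forall i, transferable D R (psi i))
  (R_out : out_finite R) (D_out : out_finite D) (c_inv : edge_invariant R c)
  (c_psi : forall i w, c (psi i w) = i) (phi_psi : forall i w, phi (psi i w) = w).

Definition retract (u : V) : V := psi (c u) (phi u).

Hypotheses (to_retract : transferable (fun u v => v = retract u) R (fun u => u))
  (from_retract : transferable (fun v u => v = retract u) R (fun u => u)).

Lemma retract_fibre v : finite (fun u => retract u = v).
Proof.
  destruct phi_T as [K [fw [_ T]]]. apply (finite_subset (fun u => phi u = phi v)); [|apply T].
  intros u <-. unfold retract. now rewrite phi_psi.
Qed.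

Lemma image_retract X i : (forall u, X u -> c u = i) -> image retract X = image (psi i) (image phi X).
Proof.
  intro hX. apply functional_extensionality. intro v. apply propositional_extensionality. split.
  - intros [u [hu <-]]. exists (phi u). split; [now exists u|]. unfold retract. now rewrite (hX u hu).
  - intros [w [[u [hu <-]] <-]]. exists u. split; auto. unfold retract. now rewrite (hX u hu).
Qed.

Lemma retract_equiv (x : RA R) : walk_equiv R (verts x) (image retract (verts x)).
Proof.
  destruct to_retract as [K1 [g1 [_ T1]]], from_retract as [K2 [g2 [_ T2]]]. split.
  - apply (many_walks_of_points R _ _ (proj1_sig x) (fun u => (u, g1 u (retract u)))); [apply RA_escaping| |].
    + intro k. destruct (transfer_walk _ _ _ _ _ T1 (proj1_sig x k) _ eq_refl) as [h1 [h2 _]].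
      split; [now exists k|split; [|exact h1]]. unfold walk_end; cbn [fst snd]. rewrite h2.
      exists (proj1_sig x k). split; auto. now exists k.
    + intro w. apply (finite_subset (fun u => u = w \/ exists v, v = retract u /\ In w (g1 u v))).
      * intros u [e|hin]; [now left|right; now exists (retract u)].
      * apply finite_union; [exists [w]; intros u ->; now left|apply T1].
  - apply (many_walks_of_points R _ _ (proj1_sig x) (fun u => (retract u, g2 (retract u) u)));
      [apply RA_escaping| |].
    + intro k. destruct (transfer_walk _ _ _ _ _ T2 _ (proj1_sig x k) eq_refl) as [h1 [h2 _]].
      split; [|split; [|exact h1]].
      * exists (proj1_sig x k). split; auto. now exists k.
      * unfold walk_end; cbn [fst snd]. rewrite h2. now exists k.
    + intro w. apply (finite_subset (fun u => exists v, (v = w \/ exists u', v = retract u' /\ In w (g2 v u'))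
                                              /\ retract u = v)).
      * intros u [e|hin]; exists (retract u); (split; [|reflexivity]); [now left|right; now exists u].
      * apply finite_bind; [apply finite_union; [exists [w]; intros v ->; now left|apply T2]|].
        intros v _. apply retract_fibre.
Qed.

Lemma phi_image (x : RA R) : exists r : RA D, walk_equiv D (verts r) (image phi (verts x)).
Proof.
  destruct phi_T as [K [fw [hK T]]]. destruct (RA_image R D phi K fw T hK R_out x) as [r [h _]]. now exists r.
Qed.

Lemma psi_image (i : I) (y : RA D) : exists r : RA R,
  walk_equiv R (verts r) (image (psi i) (verts y)) /\ forall k, c (proj1_sig r k) = i.
Proof.
  destruct (psi_T i) as [K [bw [hK T]]]. destruct (RA_image D R (psi i) K bw T hK D_out y) as [r [h1 h2]].
  exists r. split; auto. intro k. apply (h2 I c i c_inv); [intros w _; apply c_psi|now exists k].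
Qed.

Definition phi_ray (x : RA R) : RA D := proj1_sig (constructive_indefinite_description _ (phi_image x)).
Definition psi_ray (i : I) (y : RA D) : RA R := proj1_sig (constructive_indefinite_description _ (psi_image i y)).

Lemma phi_ray_equiv x : walk_equiv D (verts (phi_ray x)) (image phi (verts x)).
Proof. exact (proj2_sig (constructive_indefinite_description _ (phi_image x))). Qed.

Lemma psi_ray_equiv i y : walk_equiv R (verts (psi_ray i y)) (image (psi i) (verts y)).
Proof. exact (proj1 (proj2_sig (constructive_indefinite_description _ (psi_image i y)))). Qed.

Lemma psi_ray_invariant i y k : c (proj1_sig (psi_ray i y) k) = i.
Proof. exact (proj2 (proj2_sig (constructive_indefinite_description _ (psi_image i y))) k). Qed.

Lemma walk_equiv_phi X Y : walk_equiv R X Y -> walk_equiv D (image phi X) (image phi Y).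
Proof. destruct phi_T as [K [fw [_ T]]]. apply (walk_equiv_image _ _ _ _ _ T). Qed.

Lemma walk_equiv_psi i X Y : walk_equiv D X Y -> walk_equiv R (image (psi i) X) (image (psi i) Y).
Proof. destruct (psi_T i) as [K [bw [_ T]]]. apply (walk_equiv_image _ _ _ _ _ T). Qed.

Lemma traversable_phi X : traversable R X -> traversable D (image phi X).
Proof. destruct phi_T as [K [fw [hK T]]]. apply (traversable_image R D phi _ _ T hK R_out). Qed.

Lemma traversable_psi i Y : traversable D Y -> traversable R (image (psi i) Y).
Proof. destruct (psi_T i) as [K [bw [hK T]]]. apply (traversable_image D R (psi i) _ _ T hK D_out). Qed.

Lemma psi_ray_phi_ray (x : RA R) (y : RA D) :
  ra_eq y (phi_ray x) -> ra_eq (psi_ray (c (proj1_sig x 0)) y) x.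
Proof.
  intro hy. set (i := c (proj1_sig x 0)). apply ra_eq_walk_equiv.
  assert (hX : forall u, verts x u -> c u = i) by (intros u [k <-]; apply (RA_invariant R c c_inv)).
  assert (e1 : walk_equiv R (image (psi i) (verts y)) (image (psi i) (verts (phi_ray x)))).
  { apply walk_equiv_psi. now apply ra_eq_walk_equiv. }
  assert (e2 : walk_equiv R (image (psi i) (verts (phi_ray x))) (image (psi i) (image phi (verts x)))).
  { apply walk_equiv_psi, phi_ray_equiv. }
  assert (e3 : walk_equiv R (image (psi i) (image phi (verts x))) (verts x)).
  { rewrite <- (image_retract _ i hX). apply walk_equiv_sym, retract_equiv. }
  apply (walk_equiv_trans R _ (image (psi i) (verts y))); [apply traversable_psi, RA_traversable|apply psi_ray_equiv|].
  apply (walk_equiv_trans R _ _ _ (traversable_psi i _ (RA_traversable D (phi_ray x))) e1).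
  exact (walk_equiv_trans R _ _ _ (traversable_psi i _ (traversable_phi _ (RA_traversable R x))) e2 e3).
Qed.

Lemma phi_ray_psi_ray (x : RA R) (i : I) (y : RA D) :
  ra_eq (psi_ray i y) x -> ra_eq (phi_ray x) y.
Proof.
  intro hx. apply ra_eq_walk_equiv.
  assert (e1 : walk_equiv D (image phi (verts x)) (image phi (verts (psi_ray i y)))).
  { apply walk_equiv_phi. apply ra_eq_walk_equiv. now apply ra_eq_sym. }
  assert (e2 : walk_equiv D (image phi (verts (psi_ray i y))) (verts y)).
  { replace (verts y) with (image phi (image (psi i) (verts y))).
    - apply walk_equiv_phi, psi_ray_equiv.
    - apply functional_extensionality. intro w. apply propositional_extensionality. split.
      + intros [u [[w' [hw <-]] <-]]. now rewrite phi_psi.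
      + intro hw. exists (psi i w). split; [now exists w|apply phi_psi]. }
  apply (walk_equiv_trans D _ (image phi (verts x))); [apply traversable_phi, RA_traversable|apply phi_ray_equiv|].
  apply (walk_equiv_trans D _ _ _ (traversable_phi _ (RA_traversable R (psi_ray i y))) e1 e2).
Qed.

Theorem fibred_ends_equipotent : equipotent (End R) (I * End D).
Proof.
  exists (fun E => (c (proj1_sig (end_rep R E) 0), end_of D (phi_ray (end_rep R E)))).
  exists (fun p => end_of R (psi_ray (fst p) (end_rep D (snd p)))). split.
  - intro E. cbn [fst snd]. transitivity (end_of R (end_rep R E)); [|apply end_of_rep].
    apply end_of_eq, psi_ray_phi_ray.
    apply ra_eq_sym, ra_eq_end_rep.
  - intros [i F]. cbn [fst snd].
    set (r := psi_ray i (end_rep D F)). pose proof (ra_eq_end_rep R r) as hr.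
    f_equal.
    + rewrite <- (ra_eq_invariant R c c_inv _ _ hr). apply psi_ray_invariant.
    + transitivity (end_of D (end_rep D F)); [|apply end_of_rep].
      apply end_of_eq, (phi_ray_psi_ray _ i), hr.
Qed.

End FibredEnds.

Section CayleyGraphs.
Context {T : Type} (op : T -> T -> T) (assoc : forall x y z, op x (op y z) = op (op x y) z)
  (A : list T) (gen : sg_generates op A).

Lemma right_cayley_out_finite : out_finite (right_cayley op A).
Proof. intro v. exists (map (op v) A). intros u [a [ha ->]]. now apply in_map. Qed.

Lemma fold_left_assoc l z b : fold_left op l (op z b) = op z (fold_left op l b).
Proof. revert b; induction l as [|a l IH]; intro b; simpl; auto. now rewrite <- assoc. Qed.

Lemma sg_generates_opp : sg_generates (fun x y => op y x) A.
Proof.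
  intro x. destruct (gen x) as [a0 [l [h1 [h2 ->]]]].
  induction l as [|z l IH] using rev_ind; [now exists a0, []|].
  apply Forall_app in h2. destruct h2 as [h2 h3]. destruct (IH h2) as [b0 [l' [k1 [k2 k3]]]].
  exists z, (b0 :: l'). split; [now inversion h3|split; [now constructor|]].
  rewrite fold_left_app, k3. simpl. clear - assoc.
  revert b0. induction l' as [|a l' IH]; intro b0; [reflexivity|]. simpl. now rewrite IH, assoc.
Qed.

Fixpoint word_walk (v : T) (l : list T) : list T :=
  match l with [] => [] | a :: l' => op v a :: word_walk (op v a) l' end.
Fixpoint prefix_products (l : list T) : list T :=
  match l with [] => [] | a :: l' => a :: map (op a) (prefix_products l') end.

Lemma word_walk_chain l v : incl l A -> chain (right_cayley op A) (v :: word_walk v l).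
Proof.
  revert v; induction l as [|a l IH]; intros v h; [exact I|].
  split; [exists a; split; [apply h; now left|reflexivity]|].
  apply IH. intros b hb. apply h. now right.
Qed.

Lemma word_walk_last l v : List.last (word_walk v l) v = fold_left op l v.
Proof.
  revert v; induction l as [|a l IH]; intro v; [reflexivity|].
  change (List.last (op v a :: word_walk (op v a) l) v = fold_left op l (op v a)). now rewrite last_cons.
Qed.

Lemma word_walk_length l v : length (word_walk v l) = length l.
Proof. revert v; induction l; intro v; simpl; auto. Qed.

Lemma word_walk_In l v x : In x (word_walk v l) -> exists d, In d (prefix_products l) /\ x = op v d.
Proof.
  revert v x; induction l as [|a l IH]; intros v x h; [destruct h|].
  destruct h as [<-|h]; [exists a; split; [now left|reflexivity]|].
  destruct (IH _ _ h) as [d [hd ->]]. exists (op a d). split; [right; now apply in_map|apply eq_sym, assoc].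
Qed.

Lemma word_of_element : exists wl : T -> list T,
  forall t, incl (wl t) A /\ forall u, fold_left op (wl t) u = op u t.
Proof.
  destruct (choice (fun t (p : T * list T) => In (fst p) A /\ incl (snd p) A /\ t = fold_left op (snd p) (fst p)))
    as [word hw].
  { intro t. destruct (gen t) as [a0 [l [h1 [h2 h3]]]]. exists (a0, l).
    split; [exact h1|split; [exact (proj1 (Forall_forall _ _) h2)|exact h3]]. }
  exists (fun t => fst (word t) :: snd (word t)). intro t. destruct (hw t) as [h1 [h2 h3]]. split.
  - intros a [<-|ha]; auto.
  - intro u. simpl. rewrite fold_left_assoc. congruence.
Qed.

Lemma cayley_walks (C : T -> Prop) : finite C ->
  exists (K : nat) (Dl : T -> Prop) (Wk : T -> T -> list T), 0 < K /\ finite Dl /\ forall u t, C t ->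
    chain (clos_refl (right_cayley op A)) (u :: Wk u t) /\ List.last (Wk u t) u = op u t /\
    length (Wk u t) = K /\ forall x, In x (Wk u t) -> exists d, Dl d /\ x = op u d.
Proof.
  intros [lC hC]. destruct word_of_element as [wl hwl].
  set (K := S (list_max (map (fun t => length (wl t)) lC))).
  set (pad := fun u (L : list T) => L ++ repeat (List.last L u) (K - length L)).
  exists K, (fun d => exists t, C t /\ (d = t \/ In d (prefix_products (wl t)))),
    (fun u t => pad u (word_walk u (wl t))).
  split; [unfold K; lia|split].
  { apply finite_bind; [now exists lC|]. intros t _.
    apply finite_union; [exists [t]; intros d ->; now left|apply finite_list]. }
  intros u t ht. destruct (hwl t) as [hA' hf].
  assert (hlen : length (word_walk u (wl t)) <= K).
  { rewrite word_walk_length. unfold K.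
    pose proof (proj1 (list_max_le (map (fun t => length (wl t)) lC) _) (le_n _)) as hF.
    rewrite Forall_forall in hF. specialize (hF (length (wl t)) (in_map _ _ _ (hC t ht))). lia. }
  assert (hlast : List.last (word_walk u (wl t)) u = op u t) by (rewrite word_walk_last; apply hf).
  unfold pad. split; [|split; [|split]].
  - apply chain_app. split; [|apply chain_repeat].
    apply (chain_mono (right_cayley op A)); [now constructor|]. now apply word_walk_chain.
  - now rewrite last_app, last_repeat.
  - rewrite length_app, repeat_length. lia.
  - intros x hx. apply in_app_iff in hx. destruct hx as [hx|hx].
    + destruct (word_walk_In _ _ _ hx) as [d [hd ->]]. exists d. split; auto. exists t. now split; [|right].
    + apply repeat_spec in hx. rewrite hlast in hx. subst x. exists t. split; auto. exists t. now split; [|left].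
Qed.

Lemma cayley_transfer {V} (R : digraph V) (f : V -> T) (C : T -> Prop) : finite C ->
  (forall u v, R u v -> exists t, C t /\ f v = op (f u) t) ->
  (forall d x, finite (fun y => op y d = x)) -> (forall w, finite (fun u => f u = w)) ->
  transferable R (right_cayley op A) f.
Proof.
  intros hC hstep hmul hfib.
  destruct (cayley_walks C hC) as [K [Dl [Wk [hK [hDl hWk]]]]].
  destruct (choice (fun (p : V * V) t => R (fst p) (snd p) -> C t /\ f (snd p) = op (f (fst p)) t)) as [tf htf].
  { intros [u v]. destruct (classic (R u v)) as [h|h]; [destruct (hstep u v h) as [t ht]; now exists t|].
    exists (f u). intro; contradiction. }
  exists K, (fun u v => Wk (f u) (tf (u, v))). split; [exact hK|split].
  - intros u v h. destruct (htf (u, v) h) as [hc e]. cbn [fst snd] in e.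
    destruct (hWk (f u) _ hc) as [h1 [h2 [h3 _]]]. now rewrite e.
  - intro w. apply (finite_subset (fun u => exists d, Dl d /\ exists y, op y d = w /\ f u = y)).
    + intros u [v [h hin]]. destruct (htf (u, v) h) as [hc _].
      destruct (proj2 (proj2 (proj2 (hWk (f u) _ hc))) w hin) as [d [hd ->]]. exists d. split; auto. now exists (f u).
    + apply finite_bind; auto. intros d _. apply finite_bind; auto.
  - exact hfib.
Qed.

End CayleyGraphs.

From mathcomp Require Import all_boot.

Lemma ordinal_finite k : finite (fun _ : 'I_k => True).
Proof.
  exists (ord_enum k). intros i _. have : i \in ord_enum k by apply: mem_ord_enum.
  elim: (ord_enum k) => [|j s IH] //=. rewrite in_cons => /orP [/eqP ->|h]; [left|right]; auto.
Qed.

Lemma finite_ordinal_image {k T} (f : 'I_k -> T) : finite (fun t => exists i, t = f i).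
Proof.
  apply: (finite_subset (fun t => exists i, True /\ t = f i)); first by move=> t [i ->]; exists i.
  apply: finite_image; apply: ordinal_finite.
Qed.

Lemma finite_ordinal_list_image {k X T} (f : 'I_k -> X -> T) (l : list X) :
  finite (fun t => exists i x, In x l /\ t = f i x).
Proof.
  apply: (finite_subset (fun t => exists i x, True /\ In x l /\ t = f i x)).
    by move=> t [i [x [hx ->]]]; exists i, x.
  apply: finite_image2; [apply: ordinal_finite|apply: finite_list].
Qed.

Section ReesMatrix.
Context {G : Type} (mul : G -> G -> G) (e : G) (inv : G -> G).
Hypotheses (mulA : forall x y z, mul x (mul y z) = mul (mul x y) z)
  (mul1g : forall x, mul e x = x) (mulVg : forall x, mul (inv x) x = e).
Context (n m : nat) (P : 'I_m -> 'I_n -> G).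

Lemma mulgV x : mul x (inv x) = e.
Proof. by rewrite -[mul x _]mul1g -(mulVg (inv x)) -mulA (mulA (inv x) x) mulVg mul1g. Qed.

Lemma mulg1 x : mul x e = x.
Proof. by rewrite -(mulVg x) mulA mulgV mul1g. Qed.

Lemma mulKg x y : mul (inv x) (mul x y) = y.
Proof. by rewrite mulA mulVg mul1g. Qed.

Lemma mulKVg x y : mul x (mul (inv x) y) = y.
Proof. by rewrite mulA mulgV mul1g. Qed.

Lemma mulgK x y : mul (mul y x) (inv x) = y.
Proof. by rewrite -mulA mulgV mulg1. Qed.

Lemma mulgKV x y : mul (mul y (inv x)) x = y.
Proof. by rewrite -mulA mulVg mulg1. Qed.

Lemma invgK x : inv (inv x) = x.
Proof. by rewrite -[inv (inv x)]mulg1 -(mulVg x) mulKg. Qed.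

Lemma invMg x y : inv (mul x y) = mul (inv y) (inv x).
Proof.
  rewrite -[RHS](mulKg (mul x y)). by rewrite -(mulA x y) mulKVg mulgV mulg1.
Qed.


Local Notation rmul := (rees_mul mul P).

Lemma rees_mulA x y z : rmul x (rmul y z) = rmul (rmul x y) z.
Proof. by case: x y z => [[i g] l] [[j h] mu] [[k q] nu] /=; rewrite !mulA. Qed.

Lemma group_mul_fibre d x : finite (fun y => mul y d = x).
Proof. exists [:: mul x (inv d)] => y <-. by left; rewrite mulgK. Qed.

Lemma rees_mul_fibre d x : finite (fun y => rmul y d = x).
Proof.
  case: d x => [[j h] mu] [[i' g'] mu'].
  apply: (finite_subset (fun y => exists l, y = (i', mul (mul g' (inv h)) (inv (P l j)), l)));
    last exact: finite_ordinal_image.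
  move=> [[i g] l] [<- <- _]. by exists l; rewrite !mulgK.
Qed.

Lemma rees_entry_fibre (w : G) : finite (fun u : rees G n m => u.1.2 = w).
Proof.
  apply: (finite_subset (fun u => exists i l, True /\ True /\ u = (i, w, l))).
    by move=> [[i g] l] /= ->; exists i, l.
  apply: finite_image2; exact: ordinal_finite.
Qed.

Section RightEnds.
Hypotheses (n_pos : 0 < n) (m_pos : 0 < m).
Variables (A : list (rees G n m)) (B : list G).
Hypotheses (hA : sg_generates rmul A) (hB : sg_generates mul B).

Let j0 := Ordinal n_pos.
Let l0 := Ordinal m_pos.

Lemma right_entry_transfer : transferable (right_cayley rmul A) (right_cayley mul B) (fun u => u.1.2).
Proof.
  apply: (cayley_transfer mul mulA B hB _ _ (fun t => exists l a, In a A /\ t = mul (P l a.1.1) a.1.2)).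
  - exact: finite_ordinal_list_image.
  - move=> u _ [a [ha ->]]. exists (mul (P u.2 a.1.1) a.1.2). split; first by exists u.2, a.
    by case: u a {ha} => [[i g] l] [[j h] mu] /=; rewrite mulA.
  - exact: group_mul_fibre.
  - exact: rees_entry_fibre.
Qed.

Lemma right_embed_transfer i : transferable (right_cayley mul B) (right_cayley rmul A) (fun w => (i, w, l0)).
Proof.
  apply: (cayley_transfer rmul rees_mulA A hA _ _ (fun t => exists b, In b B /\ t = (j0, mul (inv (P l0 j0)) b, l0))).
  - apply: finite_image. exact: finite_list.
  - move=> w _ [b [hb ->]]. exists (j0, mul (inv (P l0 j0)) b, l0). split; first by exists b.
    by rewrite /= -mulA mulKVg.
  - exact: rees_mul_fibre.
  - move=> x. exists [:: x.1.2] => w <-. by left.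
Qed.

Lemma right_to_retract :
  transferable (fun u v => v = (u.1.1, u.1.2, l0)) (right_cayley rmul A) (fun u => u).
Proof.
  apply: (cayley_transfer rmul rees_mulA A hA _ _ (fun t => exists l, t = (j0, inv (P l j0), l0))).
  - exact: finite_ordinal_image.
  - move=> [[i g] l] _ ->. exists (j0, inv (P l j0), l0). split; first by exists l.
    by rewrite /= mulgK.
  - exact: rees_mul_fibre.
  - move=> w. exists [:: w] => u ->. by left.
Qed.

Lemma right_from_retract :
  transferable (fun v u => v = (u.1.1, u.1.2, l0)) (right_cayley rmul A) (fun u => u).
Proof.
  apply: (cayley_transfer rmul rees_mulA A hA _ _ (fun t => exists l, t = (j0, inv (P l0 j0), l))).
  - exact: finite_ordinal_image.
  - move=> _ [[i g] l] ->. exists (j0, inv (P l0 j0), l). split; first by exists l.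
    by rewrite /= mulgK.
  - exact: rees_mul_fibre.
  - move=> w. exists [:: w] => u ->. by left.
Qed.

Lemma right_return : transferable (transp (right_cayley rmul A)) (right_cayley rmul A) (fun u => u).
Proof.
  set ret := fun (l mu : 'I_m) (a : rees G n m) => (j0, mul (inv (P mu j0)) (inv (mul (P l a.1.1) a.1.2)), l).
  apply: (cayley_transfer rmul rees_mulA A hA _ _ (fun t => exists l mu a, In a A /\ t = ret l mu a)).
  - apply: (finite_subset (fun t => exists l, True /\ exists mu a, In a A /\ t = ret l mu a)).
      by move=> t [l h]; exists l.
    apply: finite_bind; [exact: ordinal_finite|move=> l _; exact: finite_ordinal_list_image].
  - move=> v u [a [ha ->]]. exists (ret u.2 a.2 a). split; first by exists u.2, a.2, a.
    case: u a {ha} => [[i g] l] [[j h] mu]. by rewrite /ret /= -mulA mulKVg -(mulA g) mulgK.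
  - exact: rees_mul_fibre.
  - move=> w. exists [:: w] => u ->. by left.
Qed.

Lemma rees_right_ends : ends_antichain (right_cayley rmul A) /\
  equipotent (End (right_cayley rmul A)) ('I_n * End (right_cayley mul B))%type.
Proof.
  split.
  - apply: ends_antichain_of_symmetric => X Y.
    case: right_return => [K [rv [_ T]]]. exact: many_walks_sym_of_return T.
  - apply: (fibred_ends_equipotent _ _ (fun u => u.1.1) (fun u => u.1.2) (fun i w => (i, w, l0))).
    + exact: right_entry_transfer.
    + exact: right_embed_transfer.
    + exact: right_cayley_out_finite.
    + exact: right_cayley_out_finite.
    + by move=> u v [a [_ ->]]; case: u a => [[i g] l] [[j h] mu].
    + by [].
    + by [].
    + exact: right_to_retract.
    + exact: right_from_retract.
Qed.

End RightEnds.

Lemma rees_lmul_fibre d x : finite (fun y => rmul d y = x).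
Proof.
  case: d x => [[j h] mu] [[j' g'] l'].
  apply: (finite_subset (fun y => exists i, y = (i, mul (inv (mul h (P mu i))) g', l')));
    last exact: finite_ordinal_image.
  move=> [[i g] l] [_ <- <-]. by exists i; rewrite mulKg.
Qed.

Section LeftEnds.
Hypotheses (n_pos : 0 < n) (m_pos : 0 < m).
Variables (A : list (rees G n m)) (B : list G).
Hypotheses (hA : sg_generates rmul A) (hB : sg_generates mul B).

Let i0 := Ordinal n_pos.
Let l0 := Ordinal m_pos.
Local Notation lmul := (fun x y => rmul y x).

Let rees_lmulA x y z : lmul x (lmul y z) = lmul (lmul x y) z.
Proof. exact: esym (rees_mulA z y x). Qed.

Let hA' : sg_generates lmul A := sg_generates_opp rmul rees_mulA A hA.

Lemma left_entry_transfer : transferable (right_cayley lmul A) (right_cayley mul B) (fun u => inv u.1.2).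
Proof.
  apply: (cayley_transfer mul mulA B hB _ _ (fun t => exists i a, In a A /\ t = inv (mul a.1.2 (P a.2 i)))).
  - exact: finite_ordinal_list_image.
  - move=> u _ [a [ha ->]]. exists (inv (mul a.1.2 (P a.2 u.1.1))). split; first by exists u.1.1, a.
    by case: u a {ha} => [[i g] l] [[j h] mu] /=; rewrite invMg.
  - exact: group_mul_fibre.
  - move=> w. apply: (finite_subset (fun u => exists i l, True /\ True /\ u = (i, inv w, l))).
      by move=> [[i g] l] /= <-; exists i, l; rewrite invgK.
    apply: finite_image2; exact: ordinal_finite.
Qed.

Lemma left_embed_transfer l : transferable (right_cayley mul B) (right_cayley lmul A) (fun w => (i0, inv w, l)).
Proof.
  apply: (cayley_transfer lmul rees_lmulA A hA' _ _
    (fun t => exists b, In b B /\ t = (i0, mul (inv b) (inv (P l0 i0)), l0))).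
  - apply: finite_image. exact: finite_list.
  - move=> w _ [b [hb ->]]. exists (i0, mul (inv b) (inv (P l0 i0)), l0). split; first by exists b.
    by rewrite /= mulgKV invMg.
  - exact: rees_lmul_fibre.
  - move=> x. exists [:: inv x.1.2] => w <-. by left; rewrite invgK.
Qed.

Lemma left_to_retract :
  transferable (fun u v => v = (i0, inv (inv u.1.2), u.2)) (right_cayley lmul A) (fun u => u).
Proof.
  apply: (cayley_transfer lmul rees_lmulA A hA' _ _ (fun t => exists i, t = (i0, inv (P l0 i), l0))).
  - exact: finite_ordinal_image.
  - move=> [[i g] l] _ ->. exists (i0, inv (P l0 i), l0). split; first by exists i.
    by rewrite /= invgK mulVg mul1g.
  - exact: rees_lmul_fibre.
  - move=> w. exists [:: w] => u ->. by left.
Qed.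

Lemma left_from_retract :
  transferable (fun v u => v = (i0, inv (inv u.1.2), u.2)) (right_cayley lmul A) (fun u => u).
Proof.
  apply: (cayley_transfer lmul rees_lmulA A hA' _ _ (fun t => exists i, t = (i, inv (P l0 i0), l0))).
  - exact: finite_ordinal_image.
  - move=> _ [[i g] l] ->. exists (i, inv (P l0 i0), l0). split; first by exists i.
    by rewrite /= mulVg mul1g invgK.
  - exact: rees_lmul_fibre.
  - move=> w. exists [:: w] => u ->. by left.
Qed.

Lemma left_return : transferable (transp (right_cayley lmul A)) (right_cayley lmul A) (fun u => u).
Proof.
  set ret := fun (i : 'I_n) (a : rees G n m) => (i, mul (inv (mul a.1.2 (P a.2 i))) (inv (P l0 a.1.1)), l0).
  apply: (cayley_transfer lmul rees_lmulA A hA' _ _ (fun t => exists i a, In a A /\ t = ret i a)).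
  - exact: finite_ordinal_list_image.
  - move=> v u [a [ha ->]]. exists (ret u.1.1 a). split; first by exists u.1.1, a.
    case: u a {ha} => [[i g] l] [[j h] mu]. by rewrite /ret /= mulgKV mulKg.
  - exact: rees_lmul_fibre.
  - move=> w. exists [:: w] => u ->. by left.
Qed.

Lemma rees_left_ends : ends_antichain (left_cayley rmul A) /\
  equipotent (End (left_cayley rmul A)) ('I_m * End (right_cayley mul B))%type.
Proof.
  change (left_cayley rmul A) with (right_cayley lmul A). split.
  - apply: ends_antichain_of_symmetric => X Y.
    case: left_return => [K [rv [_ T]]]. exact: many_walks_sym_of_return T.
  - apply: (fibred_ends_equipotent _ _ (fun u => u.2) (fun u => inv u.1.2) (fun l w => (i0, inv w, l))).
    + exact: left_entry_transfer.
    + exact: left_embed_transfer.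
    + exact: right_cayley_out_finite.
    + exact: right_cayley_out_finite.
    + by move=> u v [a [_ ->]]; case: u a => [[i g] l] [[j h] mu].
    + by [].
    + by move=> l w /=; rewrite invgK.
    + exact: left_to_retract.
    + exact: left_from_retract.
Qed.

End LeftEnds.

End ReesMatrix.

Theorem mainTheorem18
  (G : Type) (mul : G -> G -> G) (e : G) (inv : G -> G)
  (mulA : forall x y z, mul x (mul y z) = mul (mul x y) z)
  (mul1g : forall x, mul e x = x)
  (mulVg : forall x, mul (inv x) x = e)
  (G_fg : exists B : list G, sg_generates mul B)
  (n m : nat) (n_pos : 0 < n) (m_pos : 0 < m)
  (P : 'I_m -> 'I_n -> G)
  (A : list (rees G n m)) (hA : sg_generates (rees_mul mul P) A)
  (B : list G) (hB : sg_generates mul B) :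
  (ends_antichain (right_cayley (rees_mul mul P) A) /\
   equipotent (End (right_cayley (rees_mul mul P) A))
              ('I_n * End (right_cayley mul B))%type) /\
  (ends_antichain (left_cayley (rees_mul mul P) A) /\
   equipotent (End (left_cayley (rees_mul mul P) A))
              ('I_m * End (right_cayley mul B))%type).
Proof.
  split.
  - exact: (rees_right_ends mul e inv mulA mul1g mulVg n m P n_pos m_pos A B hA hB).
  - exact: (rees_left_ends mul e inv mulA mul1g mulVg n m P n_pos m_pos A B hA hB).
Qed.
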